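(* Every maximal biflag of $M$ (maximal with respect to inclusion among biflags) has length exactly $n-1$.
   Context: Let $M$ be a matroid with no loops and no coloops on the ground set $E=\{0,1,\dots,n\}$, of rank $r+1$; its dual $M^\perp$ has rank $n-r$. A biflat of $M$ is a pair $F|G$ where $F$ is a flat of $M$, $G$ is a flat of $M^\perp$, both are nonempty, they are not both equal to $E$, and $F\cup G=E$. Two biflats $F|G$, $F'|G'$ are compatible if ($F\subseteq F'$ and $G\supseteq G'$) or ($F\supseteq F'$ and $G\subseteq G'$). A biflag is a set of pairwise compatible biflats with $\bigcup_{F|G}(F\cap G)\neq E$; its length is its number of biflats. *)

From mathcomp Require Import all_boot.
Set Implicit Arguments. Unset Strict Implicit. Unset Printing Implicit Defensive.

Section Matroid.
Variable T : finType.
Implicit Types (ind : {set T} -> bool) (A B F G I J : {set T}).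

Definition is_matroid ind : Prop :=
  [/\ ind set0,
      (forall I J, ind J -> I \subset J -> ind I) &
      (forall I J, ind I -> ind J -> #|I| < #|J| ->
         exists2 x, x \in J :\: I & ind (x |: I))].

Definition mrank ind A : nat := \max_(I : {set T} | ind I && (I \subset A)) #|I|.

Definition mbasis ind B : bool :=
  ind B && [forall I : {set T}, (ind I && (B \subset I)) ==> (I == B)].

Definition dual ind : {set T} -> bool :=
  fun I => [exists B : {set T}, mbasis ind B && [disjoint I & B]].

Definition flat ind F : bool :=
  [forall x, (x \notin F) ==> (mrank ind F < mrank ind (x |: F))].

Definition loop ind (x : T) : bool := ~~ ind [set x].
Definition coloop ind (x : T) : bool := [forall B : {set T}, mbasis ind B ==> (x \in B)].

Definition biflat ind (p : {set T} * {set T}) : bool :=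
  [&& flat ind p.1, flat (dual ind) p.2, p.1 != set0, p.2 != set0,
      ~~ ((p.1 == setT) && (p.2 == setT)) & p.1 :|: p.2 == setT].

Definition compatible (p q : {set T} * {set T}) : bool :=
  ((p.1 \subset q.1) && (q.2 \subset p.2)) ||
  ((q.1 \subset p.1) && (p.2 \subset q.2)).

Definition biflag ind (S : {set {set T} * {set T}}) : bool :=
  [forall p in S, biflat ind p] &&
  [forall p in S, forall q in S, compatible p q] &&
  (\bigcup_(p in S) (p.1 :&: p.2) != setT).

Definition maximal_biflag ind (S : {set {set T} * {set T}}) : Prop :=
  biflag ind S /\
  forall S' : {set {set T} * {set T}}, biflag ind S' -> S \subset S' -> S' = S.

End Matroid.

(* Write rho for the rank of M and sig for the rank of the dual.  The
   height of a pair F|G is rho F + sig E - sig G; it is strictly monotone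
   along chains of compatible pairs of flats covering E, and ranges from 0
   (the pair 0|E) to |E| (the pair E|0).  Fix e outside every F :&: G of a
   maximal biflag S.  Elements with e outside F lie below those with e in F
   and the height jumps by at least 2 there, so one value [missing] in
   (0, |E|) is skipped.  Conversely every other value v is attained: the
   chain neighbours of v differ by at least 2 in height, and a flat of
   intermediate rank (lemma [flat_between]) yields a biflat between them,
   which maximality puts into S -- a contradiction.  Counting heights gives
   |S| = |E| - 2. *)

From mathcomp Require Import all_boot zify.
Set Implicit Arguments. Unset Strict Implicit. Unset Printing Implicit Defensive.

(* [lia] after discarding every hypothesis that is not a linear fact over nat:
   the arithmetic preprocessing would otherwise try to interpret the many
   boolean set-theoretic hypotheses around, which is very slow. *)
Ltac nat_lia :=
  repeat match goal with H : ?t |- _ =>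
    lazymatch t with
    | is_true (_ <= _) => fail
    | @eq nat _ _ => fail
    | _ => clear H
    end
  end; lia.

Definition flatr (T : finType) (rho : {set T} -> nat) (F : {set T}) : bool :=
  [forall x, (x \notin F) ==> (rho F < rho (x |: F))].

Lemma flatE (T : finType) (ind : {set T} -> bool) : flat ind =1 flatr (mrank ind).
Proof. by []. Qed.

Lemma flatT (T : finType) (rho : {set T} -> nat) : flatr rho setT.
Proof. by apply/forallP => x; rewrite inE. Qed.

Section RankFunction.
Variables (T : finType) (rho : {set T} -> nat).
Implicit Types (A B F H X : {set T}).
Hypothesis rho_mono : forall A B, A \subset B -> rho A <= rho B.
Hypothesis rho_U1 : forall x A, rho (x |: A) <= (rho A).+1.
Hypothesis rho_submod : forall A B, rho (A :|: B) + rho (A :&: B) <= rho A + rho B.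

Lemma span_mono x A B : rho (x |: A) <= rho A -> A \subset B -> rho (x |: B) <= rho B.
Proof.
move=> hxA hAB; have := rho_submod (x |: A) B.
rewrite -setUA (setUidPr hAB).
have : rho A <= rho ((x |: A) :&: B) by apply: rho_mono; rewrite subsetI subsetUr hAB.
lia.
Qed.

Definition cl A : {set T} := [set x | rho (x |: A) <= rho A].

Lemma sub_cl A : A \subset cl A.
Proof. by apply/subsetP => x xA; rewrite inE (setUidPr _) // sub1set. Qed.

Lemma rank_cl A : rho (cl A) = rho A.
Proof.
suff span_seq s : {subset s <= cl A} -> rho (A :|: [set:: s]) <= rho A.
  apply/eqP; rewrite eqn_leq (rho_mono (sub_cl A)) andbT.
  have := span_seq (enum (cl A)); rewrite set_enum (setUidPr (sub_cl A)).
  by apply=> x; rewrite mem_enum.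
elim: s => [|x s IH] hs; first by rewrite set_nil setU0.
have hx : rho (x |: A) <= rho A by have := hs x (mem_head x s); rewrite inE.
have hs' : {subset s <= cl A} by move=> y ys; apply: hs; rewrite inE ys orbT.
have := span_mono hx (subsetUl A [set:: s]); have := IH hs'.
by rewrite set_cons setUCA; lia.
Qed.

Lemma cl_flat A : flatr rho (cl A).
Proof.
apply/forallP => y; apply/implyP; rewrite inE -ltnNge rank_cl => hy.
by apply: leq_trans hy (rho_mono (setUS _ (sub_cl A))).
Qed.

Lemma cl_min F X : flatr rho F -> X \subset F -> cl X \subset F.
Proof.
move=> /forallP hF hXF; apply/subsetP => x; rewrite inE => hx.
apply/negPn/negP => xF; have := span_mono hx hXF; have := implyP (hF x) xF; lia.
Qed.

Lemma flat_lt F F' x : flatr rho F -> F \subset F' -> x \in F' -> x \notin F -> rho F < rho F'.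
Proof.
move=> /forallP /(_ x) /implyP hF hFF' xF' xF; apply: leq_trans (hF xF) (rho_mono _).
by rewrite subUset sub1set xF' hFF'.
Qed.

Lemma flat_U1 F x : flatr rho F -> x \notin F -> rho (x |: F) = (rho F).+1.
Proof. by move=> /forallP /(_ x) /implyP hF xF; apply/eqP; rewrite eqn_leq rho_U1 hF. Qed.

Lemma flat_between F F' x : flatr rho F -> flatr rho F' -> F \subset F' ->
  x \in F' -> x \notin F -> rho F + 2 <= rho F' ->
  exists H, [/\ flatr rho H, F \subset H, H \subset F', x \notin H & rho F < rho H < rho F'].
Proof.
move=> hF hF' hFF' xF' xF hr.
have hxF := flat_U1 hF xF.
have [y yF' yK] : exists2 y, y \in F' & y \notin cl (x |: F).
  apply/subsetPn/negP => /rho_mono; rewrite rank_cl hxF; lia.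
have yF : y \notin F.
  by apply: contra yK => yF; apply: (subsetP (sub_cl _)); rewrite !inE yF orbT.
have hyxF : rho (x |: (y |: F)) = (rho F).+2.
  apply/eqP; rewrite eqn_leq setUCA; move: (rho_U1 y (x |: F)) yK; rewrite hxF inE; lia.
have hyF := flat_U1 hF yF.
have hHF' : cl (y |: F) \subset F' by apply: cl_min; rewrite // subUset sub1set yF' hFF'.
have xH : x \notin cl (y |: F) by rewrite inE -ltnNge hyxF hyF.
exists (cl (y |: F)); split => //.
- exact: cl_flat.
- exact: subset_trans (subsetUr _ _) (sub_cl _).
- by rewrite rank_cl hyF leqnn -hyF -(rank_cl (y |: F)) (flat_lt (cl_flat _) hHF' xF' xH).
Qed.

Lemma flat_between_avoid F F' e : flatr rho F -> flatr rho F' -> F \subset F' ->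
  rho F + 2 <= rho F' ->
  exists H, [/\ flatr rho H, F \subset H, H \subset F', (e \in H -> e \in F)
              & rho F < rho H < rho F'].
Proof.
move=> hF hF' hFF' hr.
have [x [xF' xF xe]] : exists x, [/\ x \in F', x \notin F & e \in F' :\: F -> x = e].
  have [/setDP[eF' eF]|eFF] := boolP (e \in F' :\: F); first by exists e.
  have [x /setDP[xF' xF]] : exists x, x \in F' :\: F.
    by apply/set0Pn; apply: contraTneq hr => /eqP; rewrite setD_eq0 => /rho_mono; lia.
  by exists x; split => // /(negP eFF).
have [H [hH hFH hHF' xH hrH]] := flat_between hF hF' hFF' xF' xF hr.
exists H; split => // eH; apply/negPn/negP => eF.
by move: xH; rewrite xe ?eH // inE eF (subsetP hHF').
Qed.

End RankFunction.

Section MatroidRank.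
Variables (T : finType) (ind : {set T} -> bool).
Implicit Types (A B I J : {set T}).
Hypothesis ind0 : ind set0.
Hypothesis indS : forall I J, ind J -> I \subset J -> ind I.
Hypothesis indA : forall I J, ind I -> ind J -> #|I| < #|J| ->
  exists2 x, x \in J :\: I & ind (x |: I).
Local Notation rk := (mrank ind).

Lemma rk_ge I A : ind I -> I \subset A -> #|I| <= rk A.
Proof. by move=> hI hIA; apply: (leq_bigmax_cond I); rewrite hI hIA. Qed.

Lemma rk_max A : exists I, [/\ ind I, I \subset A & #|I| = rk A].
Proof.
have P0 : ind set0 && (set0 \subset A) by rewrite ind0 sub0set.
have [I /andP[hI hIA] hmax] :=
  @arg_maxnP _ set0 (fun I => ind I && (I \subset A)) (fun I => #|I|) P0.
exists I; split => //; apply/eqP; rewrite eqn_leq rk_ge //=.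
by apply/bigmax_leqP => J hJ; apply: hmax.
Qed.

Lemma rk_mono A B : A \subset B -> rk A <= rk B.
Proof.
by move=> hAB; have [I [hI hIA <-]] := rk_max A; apply: rk_ge (subset_trans hIA hAB).
Qed.

Lemma rk0 : rk set0 = 0.
Proof.
by have [I [_ /subset_leq_card]] := rk_max set0; rewrite cards0 leqn0 => /eqP -> <-.
Qed.

Lemma rk_U1 x A : rk (x |: A) <= (rk A).+1.
Proof.
have [I [hI hIxA <-]] := rk_max (x |: A).
have hIA : I :\ x \subset A.
  by apply/subsetP => y /setD1P[yx /(subsetP hIxA)]; rewrite !inE (negbTE yx).
have := rk_ge (indS hI (subsetDl I [set x])) hIA; have := cardsD1 x I; lia.
Qed.

Lemma rk_ext I A : ind I -> I \subset A ->
  exists J, [/\ ind J, I \subset J, J \subset A & #|J| = rk A].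
Proof.
move=> hI hIA; move: {2}(rk A - #|I|) (erefl (rk A - #|I|)) => k.
elim: k I hI hIA => [|k IH] I hI hIA hk.
  by exists I; split => //; apply/eqP; rewrite eqn_leq rk_ge //=; lia.
have [K [hK hKA hKc]] := rk_max A.
have [|x /setDP[xK xI] hx] := indA hI hK; first lia.
have hxA : x |: I \subset A by rewrite subUset sub1set (subsetP hKA x xK) hIA.
have [|J [hJ hxIJ hJA hJc]] := IH _ hx hxA; first by rewrite cardsU1 xI; lia.
by exists J; split => //; apply: subset_trans hxIJ; apply: subsetUr.
Qed.

(* Submodularity, by extending a basis of A :&: B to a basis of A :|: B. *)
Lemma rk_submod A B : rk (A :|: B) + rk (A :&: B) <= rk A + rk B.
Proof.
have [I [hI hIAB hIc]] := rk_max (A :&: B).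
have [J [hJ hIJ hJAB hJc]] :=
  rk_ext hI (subset_trans hIAB (subset_trans (subsetIl A B) (subsetUl A B))).
have hJ_AB : (J :&: A) :|: (J :&: B) = J by rewrite -setIUr; apply/setIidPl.
have hI_J : #|I| <= #|(J :&: A) :&: (J :&: B)|.
  by apply: subset_leq_card; rewrite setIACA setIid subsetI hIJ.
have hJA : #|J :&: A| <= rk A by apply: rk_ge (indS hJ (subsetIl _ _)) (subsetIr _ _).
have hJB : #|J :&: B| <= rk B by apply: rk_ge (indS hJ (subsetIl _ _)) (subsetIr _ _).
have := cardsUI (J :&: A) (J :&: B); rewrite hJ_AB; lia.
Qed.

Lemma mbasisP B : mbasis ind B = ind B && (#|B| == rk setT).
Proof.
apply/idP/idP.
- case/andP => hB /forallP hmax; rewrite hB /=.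
  have [J [hJ hBJ _ <-]] := rk_ext hB (subsetT B).
  by move: (hmax J); rewrite hJ hBJ /= => /eqP ->.
- case/andP => hB /eqP hc; rewrite /mbasis hB /=.
  apply/forallP => I; apply/implyP => /andP[hI hBI].
  by rewrite eq_sym eqEcard hBI hc rk_ge ?subsetT.
Qed.

Lemma basis_ex : exists B, mbasis ind B.
Proof.
have [J [hJ _ _ hJc]] := rk_ext ind0 (sub0set setT).
by exists J; rewrite mbasisP hJ hJc eqxx.
Qed.

Lemma dual0 : dual ind set0.
Proof. by have [B hB] := basis_ex; apply/existsP; exists B; rewrite hB /= -setI_eq0 set0I. Qed.

Lemma dualS I J : dual ind J -> I \subset J -> dual ind I.
Proof.
move=> /existsP[B /andP[hB hJB]] hIJ; apply/existsP; exists B.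
by rewrite hB (disjointWl hIJ hJB).
Qed.

End MatroidRank.

Section DualRank.
Variables (T : finType) (ind : {set T} -> bool).
Implicit Types (A B I J : {set T}).
Hypothesis ind0 : ind set0.
Hypothesis indS : forall I J, ind J -> I \subset J -> ind I.
Hypothesis indA : forall I J, ind I -> ind J -> #|I| < #|J| ->
  exists2 x, x \in J :\: I & ind (x |: I).
Local Notation rk := (mrank ind).
Local Notation drk := (mrank (dual ind)).

Let dual_ind0 : dual ind set0 := dual0 ind0 indA.

Lemma drk_mono A B : A \subset B -> drk A <= drk B.
Proof. exact: (@rk_mono _ (dual ind) dual_ind0). Qed.

Lemma drk_U1 x A : drk (x |: A) <= (drk A).+1.
Proof. exact: (@rk_U1 _ (dual ind) dual_ind0 (@dualS _ ind)). Qed.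

Lemma drk0 : drk set0 = 0.
Proof. exact: (@rk0 _ (dual ind) dual_ind0). Qed.

Lemma drk_formula A : mrank (dual ind) A + rk setT = #|A| + rk (~: A).
Proof.
apply/eqP; rewrite eqn_leq; apply/andP; split.
- have [I [/existsP[B /andP[hB hIB]] hIA hIc]] := @rk_max _ (dual ind) dual_ind0 A.
  move: hB; rewrite (mbasisP ind0 indA) => /andP[hB /eqP hBc].
  have h1 : #|B :&: ~: A| <= rk (~: A) by apply: rk_ge (indS hB (subsetIl _ _)) (subsetIr _ _).
  have h2 := cardsID A B; rewrite setDE in h2.
  have h3 : #|(B :&: A) :|: I| <= #|A| by apply: subset_leq_card; rewrite subUset subsetIr hIA.
  have h4 := cardsUI (B :&: A) I.
  have h5 : (B :&: A) :&: I = set0.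
    by apply/eqP; rewrite setI_eq0 disjoint_sym (disjointWr (subsetIl B A) hIB).
  rewrite h5 cards0 in h4; lia.
- have [K [hK hKA hKc]] := rk_max ind0 (~: A).
  have [J [hJ hKJ _ hJc]] := rk_ext ind0 indA hK (subsetT K).
  have hJb : mbasis ind J by rewrite (mbasisP ind0 indA) hJ hJc eqxx.
  have hdI : dual ind (A :\: J).
    by apply/existsP; exists J; rewrite hJb /= -setI_eq0 setIDAC setDIl setDv setI0.
  have h1 := rk_ge hdI (subsetDl A J).
  have h2 : #|K| <= #|J :&: ~: A| by apply: subset_leq_card; rewrite subsetI hKJ hKA.
  have h3 := cardsID A J; rewrite setDE in h3.
  have h4 := cardsID J A; rewrite setIC in h4; lia.
Qed.

(* Submodularity of the corank follows from the corank formula. *)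
Lemma drk_submod A B : drk (A :|: B) + drk (A :&: B) <= drk A + drk B.
Proof.
have := rk_submod ind0 indS indA (~: A) (~: B); rewrite -setCI -setCU.
have := drk_formula (A :|: B); have := drk_formula (A :&: B).
have := drk_formula A; have := drk_formula B; have := cardsUI A B; lia.
Qed.

Lemma rk_drk_setT : rk setT + drk setT = #|T|.
Proof. by rewrite addnC drk_formula setCT (rk0 ind0) cardsT addn0. Qed.

End DualRank.

Section Biflats.
Variables (T : finType) (ind : {set T} -> bool).
Implicit Types (A B F G I J : {set T}) (p q c : {set T} * {set T}).
Hypothesis ind0 : ind set0.
Hypothesis indS : forall I J, ind J -> I \subset J -> ind I.
Hypothesis indA : forall I J, ind I -> ind J -> #|I| < #|J| ->
  exists2 x, x \in J :\: I & ind (x |: I).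
Hypothesis no_loop : forall x, ind [set x].
Hypothesis no_coloop : forall x, ~~ coloop ind x.

Local Notation rho := (mrank ind).
Local Notation sig := (mrank (dual ind)).

Let rho_mono A B : A \subset B -> rho A <= rho B := @rk_mono _ _ ind0 A B.
Let sig_mono A B : A \subset B -> sig A <= sig B := @drk_mono _ _ ind0 indA A B.

Lemma rho_pos A : A != set0 -> 0 < rho A.
Proof.
case/set0Pn => x xA; apply: leq_trans (rho_mono (_ : [set x] \subset A)).
  by rewrite -(cards1 x) rk_ge.
by rewrite sub1set.
Qed.

Lemma sig_pos A : A != set0 -> 0 < sig A.
Proof.
case/set0Pn => x xA; apply: leq_trans (sig_mono (_ : [set x] \subset A)).
  have [B hB xB] : exists2 B, mbasis ind B & x \notin B.
    move: (no_coloop x); rewrite negb_forall => /existsP[B].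
    by rewrite negb_imply => /andP[hB xB]; exists B.
  by rewrite -(cards1 x) rk_ge //; apply/existsP; exists B; rewrite hB disjoints1.
by rewrite sub1set.
Qed.

(* Pairs satisfying the biflat conditions except nonemptiness; the empty
   pairs bot = (0, E) and top = (E, 0) are the extremal ones. *)
Definition prebiflat p : bool := [&& flatr rho p.1, flatr sig p.2 & p.1 :|: p.2 == setT].

Definition bot : {set T} * {set T} := (set0, setT).
Definition top : {set T} * {set T} := (setT, set0).

Lemma prebiflat_bot : prebiflat bot.
Proof.
rewrite /prebiflat; apply/and3P; split; [apply/forallP => x /= | exact: flatT | by rewrite set0U].
by rewrite setU0 (rk0 ind0) rho_pos ?implybT //; apply/set0Pn; exists x; rewrite inE.
Qed.

Lemma prebiflat_top : prebiflat top.
Proof.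
rewrite /prebiflat; apply/and3P; split; [exact: flatT | apply/forallP => x /= | by rewrite setU0].
by rewrite setU0 (drk0 ind0 indA) sig_pos ?implybT //; apply/set0Pn; exists x; rewrite inE.
Qed.

Definition le_pair p q : bool := (p.1 \subset q.1) && (q.2 \subset p.2).

Lemma compatibleE p q : compatible p q = le_pair p q || le_pair q p.
Proof. by []. Qed.

Lemma le_pair_refl p : le_pair p p.
Proof. by rewrite /le_pair !subxx. Qed.

Lemma le_pair_trans q p c : le_pair p q -> le_pair q c -> le_pair p c.
Proof.
by move=> /andP[h1 h2] /andP[h3 h4]; rewrite /le_pair (subset_trans h1 h3) (subset_trans h4 h2).
Qed.

Definition height p : nat := rho p.1 + sig setT - sig p.2.

Lemma height_bot : height bot = 0.
Proof. by rewrite /height (rk0 ind0) subnn. Qed.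

Lemma height_top : height top = #|T|.
Proof. by rewrite /height (drk0 ind0 indA) subn0 rk_drk_setT. Qed.

Lemma height_le_card p : height p <= #|T|.
Proof.
rewrite /height -(rk_drk_setT ind0 indS indA).
by have := rho_mono (subsetT p.1); have := sig_mono (subsetT p.2); lia.
Qed.

(* Heights are monotone along [le_pair], and strictly so on distinct
   prebiflats since a flat is determined by its rank within a larger flat. *)
Lemma height_le p q : le_pair p q -> height p <= height q.
Proof.
by case/andP => /rho_mono h1 /sig_mono h2; rewrite /height; have := sig_mono (subsetT p.2); lia.
Qed.

Lemma height_lt p q : prebiflat p -> prebiflat q -> le_pair p q -> p != q ->
  height p < height q.
Proof.
case: p q => [F G] [F' G'] /and3P[hF _ _] /and3P[_ hG' _] /andP[/= hFF' hG'G] hne.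
have := rho_mono hFF'; have := sig_mono hG'G; have := sig_mono (subsetT G); rewrite /height /=.
have [eF|] := eqVneq F F'.
  have [x xG xG'] : exists2 x, x \in G & x \notin G'.
    apply/subsetPn; apply: contra hne => hGG'.
    by rewrite eF xpair_eqE eqxx eqEsubset hGG' hG'G.
  have := flat_lt sig_mono hG' hG'G xG xG' => /=; rewrite eF; lia.
rewrite eqEsubset hFF' /= => /subsetPn[x xF' xF].
have := flat_lt rho_mono hF hFF' xF' xF => /=; lia.
Qed.

Lemma prebiflat_nonempty p : prebiflat p ->
  (p.1 != set0) && (p.2 != set0) = (0 < height p < #|T|).
Proof.
case: p => F G /and3P[_ _ /eqP /=]; rewrite /height /=.
have hN := rk_drk_setT ind0 indS indA.
have [->|/rho_pos hF] := eqVneq F set0.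
  by rewrite set0U => ->; rewrite (rk0 ind0) subnn.
have [->|/sig_pos hG] := eqVneq G set0.
  by rewrite setU0 => ->; rewrite (drk0 ind0 indA) subn0 hN ltnn andbF.
move=> _; have := rho_mono (subsetT F); have := sig_mono (subsetT G).
by move=> hFT hGT; rewrite -hN; apply/esym/andP; split; lia.
Qed.

Lemma prebiflat_sub F G p : prebiflat p -> flatr rho F -> flatr sig G ->
  p.1 \subset F -> p.2 \subset G -> prebiflat (F, G).
Proof.
case/and3P => _ _ /eqP hcov hF hG h1 h2.
by rewrite /prebiflat hF hG eqEsubset subsetT -hcov setUSS.
Qed.

Lemma height_jump e p q : prebiflat p -> prebiflat q -> le_pair p q ->
  e \in q.1 -> e \notin p.1 -> e \in p.2 -> e \notin q.2 -> height p + 2 <= height q.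
Proof.
case/and3P => hp1 _ _ /and3P[_ hq2 _] /andP[h1 h2] eq1 ep1 ep2 eq2.
have := flat_lt rho_mono hp1 h1 eq1 ep1; have := flat_lt sig_mono hq2 h2 ep2 eq2.
by have := sig_mono (subsetT p.2); rewrite /height; lia.
Qed.

Lemma interpolate e p q : prebiflat p -> prebiflat q -> le_pair p q ->
  e \notin p.1 :&: p.2 -> e \notin q.1 :&: q.2 -> height p + 2 <= height q ->
  (e \in q.1 :&: p.2 -> height p + 2 < height q) ->
  exists2 c, [&& prebiflat c, e \notin c.1 :&: c.2, le_pair p c & le_pair c q]
           & height p < height c < height q.
Proof.
case: p q => F G [F' G'] hp hq /andP[/= hFF' hG'G] eFG eFG' h2 hexc.
have /and3P[/= hF hG _] := hp; have /and3P[/= hF' hG' _] := hq.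
have hGT := sig_mono (subsetT G); have hG'T := sig_mono (subsetT G').
have hrFF' := rho_mono hFF'; have hsG'G := sig_mono hG'G.
move: h2 hexc; rewrite /height /= => h2 hexc.
have [hr2|hr1] := leqP (rho F + 2) (rho F').
  have [H [hH hFH hHF' heH /andP[hrH1 hrH2]]] := flat_between_avoid rho_mono (rk_U1 ind0 indS)
    (rk_submod ind0 indS indA) e hF hF' hFF' hr2.
  exists (H, G); rewrite /height /=; last by nat_lia.
  rewrite (prebiflat_sub hp) ?subxx //= /le_pair hFH hHF' hG'G subxx !andbT.
  by apply: contra eFG; rewrite !inE => /andP[/heH -> ->].
have [hs2|hs1] := leqP (sig G' + 2) (sig G).
  have [H [hH hG'H hHG heH /andP[hsH1 hsH2]]] := flat_between_avoid sig_mono (drk_U1 ind0 indA)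
    (drk_submod ind0 indS indA) e hG' hG hG'G hs2.
  exists (F', H); rewrite /height /=; last by nat_lia.
  rewrite (prebiflat_sub hq) ?subxx //= /le_pair hFF' hHG hG'H subxx !andbT.
  by apply: contra eFG'; rewrite !inE => /andP[-> /heH ->].
exists (F', G); rewrite /height /=; last by nat_lia.
rewrite (prebiflat_sub hp) //= /le_pair hFF' hG'G !subxx !andbT.
by apply/negP => /hexc; nat_lia.
Qed.

Lemma biflat_avoid e p : e \notin p.1 :&: p.2 ->
  biflat ind p = prebiflat p && (0 < height p < #|T|).
Proof.
move=> ep; have [hp|hp] := boolP (prebiflat p); last first.
  by apply/negbTE; apply: contra hp => /and5P[h1 h2 _ _ /andP[_ h3]]; apply/and3P.
rewrite -(prebiflat_nonempty hp); case/and3P: hp => h1 h2 h3.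
rewrite /biflat !flatE h1 h2 h3 /= andbT.
suff -> : ~~ ((p.1 == setT) && (p.2 == setT)) by rewrite andbT.
by apply: contra ep => /andP[/eqP -> /eqP ->]; rewrite setIT inE.
Qed.

Section MaximalBiflag.
Variable S : {set {set T} * {set T}}.
Hypothesis maxS : maximal_biflag ind S.
Variable e : T.
Hypothesis eS : forall p, p \in S -> e \notin p.1 :&: p.2.

Lemma S_biflat p : p \in S -> prebiflat p && (0 < height p < #|T|).
Proof.
move=> pS; case: maxS => /andP[/andP[/forall_inP hS _] _] _.
by rewrite -(biflat_avoid (eS pS)) hS.
Qed.

Lemma S_comparable p q : p \in S -> q \in S -> le_pair p q || le_pair q p.
Proof. by case: maxS => /andP[/andP[_ /forall_inP hS] _] _ /hS /forall_inP h /h. Qed.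

Lemma S_insert c : prebiflat c -> e \notin c.1 :&: c.2 -> 0 < height c < #|T| ->
  (forall q, q \in S -> le_pair q c || le_pair c q) -> c \in S.
Proof.
move=> hc ec hhc hcomp; case: maxS => hS hmax.
suff hcS : biflag ind (c |: S) by rewrite -(hmax _ hcS (subsetUr _ _)) setU11.
have /andP[/andP[/forall_inP hSb _] _] := hS.
rewrite /biflag; apply/andP; split; first (apply/andP; split).
- apply/forall_inP => p; rewrite in_setU1 => /predU1P[->|/hSb //].
  by rewrite (biflat_avoid ec) hc hhc.
- apply/forall_inP => p; rewrite in_setU1 => /predU1P[->|pS];
    apply/forall_inP => q; rewrite in_setU1 => /predU1P[->|qS]; rewrite ?compatibleE.
  + by rewrite le_pair_refl.
  + by rewrite orbC hcomp.
  + exact: hcomp.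
  + exact: S_comparable.
- apply/negP => /eqP /setP /(_ e); rewrite inE => /bigcupP[p].
  by rewrite in_setU1 => /predU1P[->|/eS /negP pe //]; apply/negP.
Qed.

Definition chain : {set {set T} * {set T}} := [set bot; top] :|: S.

Lemma chainP p : reflect [\/ p = bot, p = top | p \in S] (p \in chain).
Proof.
rewrite in_setU in_set2 -orbA; apply: (iffP or3P).
  by case=> [/eqP ->|/eqP ->|pS]; [apply: Or31|apply: Or32|apply: Or33].
by case=> [->|->|pS]; [apply: Or31|apply: Or32|apply: Or33].
Qed.

Lemma bot_in_chain : bot \in chain.
Proof. by apply/chainP; apply: Or31. Qed.

Lemma top_in_chain : top \in chain.
Proof. by apply/chainP; apply: Or32. Qed.

Lemma S_in_chain p : p \in S -> p \in chain.
Proof. by move=> pS; apply/chainP; apply: Or33. Qed.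

Lemma chain_prebiflat p : p \in chain -> prebiflat p.
Proof.
by case/chainP => [->|->|/S_biflat/andP[]//]; [exact: prebiflat_bot|exact: prebiflat_top].
Qed.

Lemma chain_avoid p : p \in chain -> e \notin p.1 :&: p.2.
Proof. by case/chainP => [->|->|/eS //]; rewrite /= ?setI0 ?set0I inE. Qed.

Lemma chain_comparable p q : p \in chain -> q \in chain -> le_pair p q || le_pair q p.
Proof.
have le_bot r : le_pair bot r by rewrite /le_pair sub0set subsetT.
have le_top r : le_pair r top by rewrite /le_pair sub0set subsetT.
case/chainP => [->|->|pS]; first by rewrite le_bot.
  by rewrite le_top orbT.
case/chainP => [->|->|qS]; first by rewrite le_bot orbT.
  by rewrite le_top.
exact: S_comparable.
Qed.

Lemma chain_le p q : p \in chain -> q \in chain -> height q <= height p -> le_pair q p.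
Proof.
move=> pC qC hqp; case/orP: (chain_comparable pC qC) => // hpq.
have [<-|hne] := eqVneq p q; first exact: le_pair_refl.
by have := height_lt (chain_prebiflat pC) (chain_prebiflat qC) hpq hne; rewrite ltnNge hqp.
Qed.

Lemma chain_jump p q : p \in chain -> q \in chain -> e \notin p.1 -> e \in q.1 ->
  height p + 2 <= height q.
Proof.
move=> pC qC ep1 eq1.
have /and3P[_ _ /eqP hcovp] := chain_prebiflat pC.
have ep2 : e \in p.2 by move: (in_setT e); rewrite -hcovp inE (negbTE ep1).
have eq2 : e \notin q.2 by move: (chain_avoid qC); rewrite inE eq1.
have hpq : le_pair p q.
  case/orP: (chain_comparable pC qC) => // /andP[/subsetP hqp _].
  by move: ep1; rewrite hqp.
exact: height_jump (chain_prebiflat pC) (chain_prebiflat qC) hpq eq1 ep1 ep2 eq2.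
Qed.

(* The one height not realised by S: just above all pairs F|G with e not in F. *)
Definition below_e : nat := \max_(p in chain | e \notin p.1) height p.
Definition missing : nat := below_e.+1.

Lemma below_e_jump q : q \in chain -> e \in q.1 -> below_e + 2 <= height q.
Proof.
move=> qC eq1; have e_bot : e \notin bot.1 by rewrite inE.
suff : below_e <= height q - 2 by have := chain_jump bot_in_chain qC e_bot eq1; nat_lia.
by apply/bigmax_leqP => p /andP[pC ep1]; have := chain_jump pC qC ep1 eq1; nat_lia.
Qed.

Lemma height_le_below_e p : p \in chain -> e \notin p.1 -> height p <= below_e.
Proof. by move=> pC ep1; apply: (leq_bigmax_cond p); apply/andP. Qed.

Lemma missing_not_height p : p \in S -> height p != missing.
Proof.
move=> /S_in_chain pC; have [ep1|ep1] := boolP (e \in p.1).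
  by have := below_e_jump pC ep1; rewrite /missing; nat_lia.
by have := height_le_below_e pC ep1; rewrite /missing; nat_lia.
Qed.

Lemma missing_lt : missing < #|T|.
Proof. by have := below_e_jump top_in_chain (in_setT e); rewrite height_top /missing; nat_lia. Qed.

Lemma neighbours v : 0 < v < #|T| -> (forall p, p \in S -> height p != v) ->
  exists pm, exists pp, [/\ pm \in chain, pp \in chain, height pm < v < height pp
    & forall q, q \in chain -> le_pair q pm || le_pair pp q].
Proof.
move=> /andP[v0 vT] vS.
have hbot : (bot \in chain) && (height bot < v) by rewrite bot_in_chain height_bot.
have htop : (top \in chain) && (v < height top) by rewrite top_in_chain height_top.
have [pm /andP[pmC pmv] pm_max] :=
  @arg_maxnP _ bot (fun p => (p \in chain) && (height p < v)) height hbot.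
have [pp /andP[ppC ppv] pp_min] :=
  @arg_minnP _ top (fun p => (p \in chain) && (v < height p)) height htop.
exists pm, pp; split; rewrite ?pmv ?ppv //.
move=> q qC; have : height q != v.
  case/chainP: qC => [->|->|/vS //]; first by rewrite height_bot eq_sym -lt0n.
  by rewrite height_top neq_ltn vT orbT.
rewrite neq_ltn => /orP[qv|vq].
- by rewrite (chain_le pmC qC) //; apply: pm_max; rewrite qC qv.
- by rewrite (chain_le qC ppC) ?orbT //; apply: pp_min; rewrite qC vq.
Qed.

(* Every height in (0, |E|) except [missing] is realised by S: otherwise,
   interpolating between the neighbours of the height yields a biflat that
   maximality forces into S although it lies strictly between them. *)
Lemma height_attained v : 0 < v < #|T| -> v != missing -> exists2 p, p \in S & height p = v.
Proof.
move=> hv vm; have [/exists_inP[p pS /eqP]|notS] := boolP [exists p in S, height p == v].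
  by exists p.
have vS p : p \in S -> height p != v.
  by move=> pS; apply: contra notS => hp; apply/exists_inP; exists p.
exfalso.
have [pm [pp [pmC ppC /andP[pmv vpp] hsplit]]] := neighbours hv vS.
have hmp : le_pair pm pp by apply: chain_le ppC pmC _; nat_lia.
have hexc : e \in pp.1 :&: pm.2 -> height pm + 2 < height pp.
  rewrite inE => /andP[epp epm]; rewrite ltnNge; apply: contra vm => hgap.
  have epm1 : e \notin pm.1 by move: (chain_avoid pmC); rewrite inE epm andbT.
  have : below_e <= height pm.
    apply/bigmax_leqP => q /andP[qC eq1].
    case/orP: (hsplit q qC) => [/height_le //|/andP[/subsetP hq _]].
    by move: eq1; rewrite hq.
  by have := height_le_below_e pmC epm1; rewrite /missing; nat_lia.
have [|c /and4P[hc ec hpmc hcpp] /andP[hc1 hc2]] := interpolate (chain_prebiflat pmC)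
  (chain_prebiflat ppC) hmp (chain_avoid pmC) (chain_avoid ppC) _ hexc; first by nat_lia.
have cS : c \in S.
  apply: S_insert hc ec _ _; first by have := height_le_card pp; nat_lia.
  move=> q /S_in_chain qC; case/orP: (hsplit q qC) => hq.
  - by rewrite (le_pair_trans hq hpmc).
  - by rewrite (le_pair_trans hcpp hq) orbT.
by case/orP: (hsplit c (S_in_chain cS)) => /height_le; nat_lia.
Qed.

Lemma height_inj : {in S &, injective height}.
Proof.
move=> p q pS qS hpq; apply/eqP; apply: contraT => hne.
have [hp _] := andP (S_biflat pS); have [hq _] := andP (S_biflat qS).
case/orP: (S_comparable pS qS) => [hle|hle].
  by have := height_lt hp hq hle hne; rewrite hpq ltnn.
by have := height_lt hq hp hle (contra_neq esym hne); rewrite hpq ltnn.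
Qed.

(* Hence S is in bijection with the heights in (0, |E|) other than [missing]. *)
Lemma card_maximal_biflag : #|S| = #|T| - 2.
Proof.
have hheights : map height (enum S) =i rem missing (iota 1 (#|T| - 1)).
  move=> v; rewrite mem_rem_uniq ?iota_uniq // inE mem_iota; apply/mapP/andP.
    case=> p; rewrite mem_enum => pS ->; split; first exact: missing_not_height.
    by have /and3P[_ hp0 hpT] := S_biflat pS; nat_lia.
  case=> vm /andP[hv1 hv2]; have [|p pS <-] := height_attained _ vm; first by nat_lia.
  by exists p; rewrite ?mem_enum.
have huniq : uniq (map height (enum S)).
  by rewrite map_inj_in_uniq ?enum_uniq // => p q; rewrite !mem_enum; apply: height_inj.
have := perm_size (uniq_perm huniq (rem_uniq _ (iota_uniq _ _)) hheights).
rewrite size_map -cardE size_rem ?size_iota ?mem_iota -?subn1 -?subnDA; first by [].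
by have := missing_lt; rewrite /missing; nat_lia.
Qed.

End MaximalBiflag.

End Biflats.

(* The main theorem: pick e outside the union of the F :&: G, which exists
   by the definition of a biflag, and count with |E| = n + 1. *)
Theorem mainTheorem2 (n r : nat) (ind : {set 'I_n.+1} -> bool) :
  is_matroid ind ->
  (forall x : 'I_n.+1, ~~ loop ind x) ->
  (forall x : 'I_n.+1, ~~ coloop ind x) ->
  mrank ind setT = r.+1 ->
  forall S : {set {set 'I_n.+1} * {set 'I_n.+1}},
    maximal_biflag ind S -> #|S| = n - 1.
Proof.
move=> [ind0 indS indA] no_loop no_coloop _ S maxS.
have ind1 x : ind [set x] by apply/negPn; exact: no_loop.
have [e _ eS] : exists2 e, e \in setT & e \notin \bigcup_(p in S) (p.1 :&: p.2).
  by apply/subsetPn; rewrite subTset; case: maxS => /andP[_ ->].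
have eS' p : p \in S -> e \notin p.1 :&: p.2.
  by move=> pS; apply: contra eS => ep; apply/bigcupP; exists p.
by rewrite (card_maximal_biflag ind0 indS indA ind1 no_coloop maxS eS') card_ord subSS subn1.
Qed.
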